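(* Let $(X,d)$ be a separable complete metric space, $\phi:X\times X\to[0,\infty)$ a Carath\'eodory distance, $(T,\mathsf{T},\mu)$ a $\sigma$-finite measure space and $h:T\times X\to[0,\infty]$ a Carath\'eodory function (measurable in $t$, continuous in $x$); set $F(z):=\int h(t,z)\,d\mu(t)$ and assume $\mathrm{zer}F:=\{z\mid F(z)=0\}$ is non-empty. Let $\tau,\sigma:[0,\infty)\to[0,\infty)$ be nondecreasing with $\tau(0)=\sigma(0)=0$ and $\tau(\varepsilon),\sigma(\varepsilon)>0$ for $\varepsilon>0$. Suppose that for all $x\in X$, \[\mu\big(\{t\in T\mid h(t,x)\ge\tau(\mathrm{dist}^\phi_{\mathrm{zer}F}(x))\}\big)\ge\sigma(\mathrm{dist}^\phi_{\mathrm{zer}F}(x)).\] Then $(\sigma\cdot\tau)(\varepsilon):=\sigma(\varepsilon)\tau(\varepsilon)$ is a modulus of $\phi$-regularity for $F$. Moreover, if $\tau$ and $\sigma$ are convex and $D$ is a collection of $X$-valued random variables (on some probability space) such that $\mathrm{dist}^\phi_{\mathrm{zer}F}(x)$ is integrable for all $x\in D$, then $\sigma\cdot\tau$ is a modulus of $\phi$-regularity for $F$ in mean w.r.t.\ $D$.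
   Context: A Carath\'eodory distance is a function $\phi:X\times X\to[0,\infty)$ continuous in its left argument and Borel measurable in its right argument; $\mathrm{dist}^\phi_S(x):=\inf_{s\in S}\phi(s,x)$. A modulus of $\phi$-regularity for $F$ is a function $\tau:(0,\infty)\to(0,\infty)$ such that for all $\varepsilon>0$ and $x\in X$, $F(x)<\tau(\varepsilon)$ implies $\mathrm{dist}^\phi_{\mathrm{zer}F}(x)<\varepsilon$. A modulus of $\phi$-regularity for $F$ in mean w.r.t.\ $D$ is a function $\tau:(0,\infty)\to(0,\infty)$ such that for all $\varepsilon>0$ and $x\in D$, $\mathbb{E}[F(x)]<\tau(\varepsilon)$ implies $\mathbb{E}[\mathrm{dist}^\phi_{\mathrm{zer}F}(x)]<\varepsilon$. *)

From HB Require Import structures.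
From mathcomp Require Import all_boot all_order all_algebra.
From mathcomp Require Import all_classical all_reals all_analysis.
From mathcomp Require Import measurable_realfun.
Set Implicit Arguments. Unset Strict Implicit. Unset Printing Implicit Defensive.
Import Order.TTheory GRing.Theory Num.Theory.
Import numFieldNormedType.Exports.
Local Open Scope classical_set_scope.
Local Open Scope ring_scope.

(** Metric spaces equipped with a (irrelevant) distinguished point; needed
    because MathComp measurable types are pointed.  Harmless here since the
    space is nonempty (zer F is assumed nonempty). *)
#[short(type="pmetricType")]
HB.structure Definition PointedMetric (K : numDomainType) :=
  { M of Metric K M & Choice M & isPointed M }.

Definition borel (X : ptopologicalType) := g_sigma_algebraType (@open X).

Definition caratheodory_distance {R : realType} {X : ptopologicalType}
  (phi : X -> X -> R) : Prop :=
  (forall s x, 0 <= phi s x) /\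
  (forall x, continuous (fun s => phi s x)) /\
  (forall s, measurable_fun setT (phi s : borel X -> R)).

Definition distphi {R : realType} {X : Type} (phi : X -> X -> R)
  (S : set X) (x : X) : R := inf [set phi s x | s in S].

Definition zer {R : realType} {X : Type} (F : X -> \bar R) : set X :=
  [set z | F z = 0%E].

Definition modulus_regularity {R : realType} {X : Type}
  (phi : X -> X -> R) (F : X -> \bar R) (tau : R -> R) : Prop :=
  (forall eps, 0 < eps -> 0 < tau eps) /\
  (forall eps, 0 < eps -> forall x : X,
     (F x < (tau eps)%:E)%E -> distphi phi (zer F) x < eps).

Definition modulus_regularity_mean {R : realType} {X : Type}
  {dO} {Omega : measurableType dO} (P : probability Omega R)
  (D : set (Omega -> X))
  (phi : X -> X -> R) (F : X -> \bar R) (tau : R -> R) : Prop :=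
  (forall eps, 0 < eps -> 0 < tau eps) /\
  (forall eps, 0 < eps -> forall x, D x ->
     (\int[P]_w F (x w) < (tau eps)%:E)%E ->
     (\int[P]_w (distphi phi (zer F) (x w))%:E < eps%:E)%E).

Definition nondecr_nonneg {R : realType} (f : R -> R) : Prop :=
  forall a b, 0 <= a -> a <= b -> f a <= f b.

Definition convex_nonneg {R : realType} (f : R -> R) : Prop :=
  forall a b t, 0 <= a -> 0 <= b -> 0 <= t -> t <= 1 ->
    f (t * a + (1 - t) * b) <= t * f a + (1 - t) * f b.

Definition complete_space {R : realType} (X : pmetricType R) : Prop :=
  forall F : set_system X, ProperFilter F -> cauchy F -> cvg F.

Definition separable_space (X : topologicalType) : Prop :=
  exists S : set X, countable S /\ dense S.

From HB Require Import structures.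
From mathcomp Require Import all_boot all_order all_algebra.
From mathcomp Require Import all_classical all_reals all_analysis.
From mathcomp Require Import measurable_realfun.
From mathcomp Require Import ring lra.
Set Implicit Arguments. Unset Strict Implicit. Unset Printing Implicit Defensive.
Import Order.TTheory GRing.Theory Num.Theory.
Import numFieldNormedType.Exports.
Local Open Scope classical_set_scope.
Local Open Scope ring_scope.

(* Markov's inequality for t |-> h t x, combined with the hypothesis on the
   measure of {t | h t x >= tau (dist x)}, gives sigma (dist x) * tau (dist x)
   <= F x for every x; as sigma * tau is nondecreasing, it is a modulus of
   regularity.  When tau and sigma are convex, so is sigma * tau, and its
   supporting line at eps gives the Jensen-type bound eps <= E[dist (x w)] ->
   sigma eps * tau eps <= E[F (x w)].  The integral of a nonnegative function
   is the supremum over its simple minorants, so F (x w) need not be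
   measurable in w. *)

Section convex_nonneg.
Context {R : realType}.
Implicit Types f g : R -> R.

Lemma nondecr_nonneg_mul f g :
  (forall e, 0 <= e -> 0 <= f e) -> (forall e, 0 <= e -> 0 <= g e) ->
  nondecr_nonneg f -> nondecr_nonneg g -> nondecr_nonneg (fun e => f e * g e).
Proof.
move=> f0 g0 ndf ndg a b a0 ab.
by apply: ler_pM; [exact: f0|exact: g0|exact: ndf|exact: ndg].
Qed.

Lemma convex_nonneg_mul f g :
  (forall e, 0 <= e -> 0 <= f e) -> (forall e, 0 <= e -> 0 <= g e) ->
  nondecr_nonneg f -> nondecr_nonneg g ->
  convex_nonneg f -> convex_nonneg g -> convex_nonneg (fun e => f e * g e).
Proof.
move=> f0 g0 ndf ndg cf cg a b t a0 b0 t0 t1.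
have ab0 : 0 <= t * a + (1 - t) * b by apply: addr_ge0; apply: mulr_ge0; lra.
apply: (@le_trans _ _ ((t * f a + (1 - t) * f b) * (t * g a + (1 - t) * g b))).
  by apply: ler_pM; [exact: f0|exact: g0|exact: cf|exact: cg].
(* t f a g a + (1 - t) f b g b exceeds the product of the convex combinations
   by t (1 - t) (f a - f b) (g a - g b), which is nonnegative since f and g
   are both nondecreasing. *)
have comonotone : 0 <= (f a - f b) * (g a - g b).
  have [ab|ba] := leP a b.
    by have := ndf a b a0 ab; have := ndg a b a0 ab; nra.
  by have := ndf b a b0 (ltW ba); have := ndg b a b0 (ltW ba); nra.
have t_1t : 0 <= t * (1 - t) by nra.
by have := mulr_ge0 t_1t comonotone; nra.
Qed.

Lemma convex_nonneg_slope_le g a b c : convex_nonneg g ->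
  0 <= a -> a < b -> b < c -> (g b - g a) * (c - b) <= (g c - g b) * (b - a).
Proof.
move=> cg a0 ab bc.
pose t := (c - b) / (c - a).
have t0 : 0 <= t by rewrite divr_ge0 //; lra.
have t1 : t <= 1 by rewrite ler_pdivrMr //; lra.
have tb : t * a + (1 - t) * c = b by rewrite /t; field; lra.
have := cg a c t a0 (ltW (le_lt_trans a0 (lt_trans ab bc))) t0 t1.
have ca : 0 <= c - a by lra.
rewrite tb => /(ler_wpM2r ca).
have -> : (t * g a + (1 - t) * g c) * (c - a) = (c - b) * g a + (b - a) * g c.
  by rewrite /t; field; lra.
nra.
Qed.

(* The slope of the supporting line is the supremum of the left difference
   quotients of g at e, which are bounded by the right ones. *)
Lemma convex_nonneg_supporting_line g e :
  convex_nonneg g -> nondecr_nonneg g -> 0 < e ->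
  exists2 s, 0 <= s & forall y, 0 <= y -> g e + s * (y - e) <= g y.
Proof.
move=> cg ndg e0.
pose S := [set (g e - g a) / (e - a) | a in [set a | 0 <= a < e]].
have S0 : S ((g e - g 0) / (e - 0)) by exists 0; rewrite //= lexx.
have S_le_right y : e < y -> ubound S ((g y - g e) / (y - e)).
  move=> ey _ [a /andP[a0 ae] <-].
  rewrite ler_pdivrMr ?subr_gt0 // mulrAC ler_pdivlMr ?subr_gt0 //.
  by have := convex_nonneg_slope_le cg a0 ae ey; nra.
have supS : has_sup S.
  by split; [exists ((g e - g 0) / (e - 0)) | eexists; apply: (S_le_right (e + 1)); lra].
exists (sup S).
  apply: le_trans (sup_ubound supS.2 S0).
  by rewrite divr_ge0 ?subr_ge0 ?ndg //; lra.
move=> y y0; have [ye|ey|->] := ltgtP y e; last by rewrite subrr mulr0 addr0.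
- have Sy : S ((g e - g y) / (e - y)) by exists y; rewrite //= y0 ye.
  have := sup_ubound supS.2 Sy; rewrite ler_pdivrMr ?subr_gt0 //; nra.
- have := sup_le_ub (ex_intro _ _ S0) (S_le_right y ey).
  rewrite ler_pdivlMr ?subr_gt0 //; nra.
Qed.

End convex_nonneg.

Lemma distphi_ge0 {R : realType} {X : Type} (phi : X -> X -> R) (S : set X) x :
  S !=set0 -> (forall s, 0 <= phi s x) -> 0 <= distphi phi S x.
Proof.
move=> [z Sz] phi0; apply: lb_le_inf; first by exists (phi z x), z.
by move=> _ [s _ <-].
Qed.

Section integral_lower_bounds.
Local Open Scope ereal_scope.
Context d (T : measurableType d) (R : realType).
Variable mu : {measure set T -> \bar R}.

(* No measurability is needed: the integral of a nonnegative function is the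
   supremum of the integrals of its nonnegative simple minorants. *)
Lemma ge0_le_integralT (f g : T -> \bar R) :
  (forall x, 0 <= f x) -> (forall x, f x <= g x) ->
  \int[mu]_x f x <= \int[mu]_x g x.
Proof.
move=> f0 fg; have g0 x : 0 <= g x := le_trans (f0 x) (fg x).
rewrite !ge0_integralTE //; apply: le_ereal_sup => _ [h hf <-].
by exists h => // x; exact: le_trans (hf x) (fg x).
Qed.

Lemma le_integral_measure_ge (f : T -> \bar R) (c : R) :
  (0 <= c)%R -> (forall t, 0 <= f t) -> measurable_fun setT f ->
  c%:E * mu [set t | c%:E <= f t] <= \int[mu]_t f t.
Proof.
move=> c0 f0 mf.
have mA : measurable [set t | c%:E <= f t].
  by rewrite -[X in measurable X]setTI; exact: emeasurable_fun_c_infty.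
rewrite -integral_cst // integral_mkcond; apply: ge0_le_integralT => t.
  by rewrite /patch; case: ifP; rewrite ?lee_fin.
by rewrite /patch; case: ifP => // /set_mem.
Qed.

End integral_lower_bounds.

Section probability_lower_bounds.
Local Open Scope ereal_scope.
Context d (T : measurableType d) (R : realType).
Variable P : probability T R.

Lemma affine_minorant_le_integral (Y : T -> R) (Z : T -> \bar R) (c s : R) :
  P.-integrable setT (fun w => (Y w)%:E) -> (forall w, 0 <= Z w) ->
  (forall w, (c + s * Y w)%:E <= Z w) ->
  (c + s * fine (\int[P]_w (Y w)%:E))%:E <= \int[P]_w Z w.
Proof.
move=> iY Z0 LZ.
have cst_int : P.-integrable setT (EFin \o cst c).
  exact: finite_measure_integrable_cst.
have <- : \int[P]_w (c + s * Y w)%:E = (c + s * fine (\int[P]_w (Y w)%:E))%:E.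
  under eq_integral do rewrite EFinD EFinM.
  rewrite integralD //; last exact: integrableZl.
  have P1 : (P : {measure set T -> \bar R}) setT = 1 := probability_setT P.
  rewrite integral_cst // P1 mule1 integralZl //.
  by rewrite EFinD EFinM fineK ?(integrable_fin_num _ iY).
(* Only the positive part of the minorant is compared with Z, so Z need not
   be measurable. *)
rewrite integralE -[X in _ <= X]sube0; apply: leeB; last first.
  by apply: integral_ge0 => w _; exact: funeneg_ge0.
apply: ge0_le_integralT => [w|w]; first exact: funepos_ge0.
by rewrite funeposE ge_max LZ Z0.
Qed.

Lemma convex_nondecr_le_integral (g : R -> R) (Y : T -> R) (Z : T -> \bar R) e :
  convex_nonneg g -> nondecr_nonneg g -> (0 < e)%R ->
  P.-integrable setT (fun w => (Y w)%:E) -> (forall w, 0 <= Y w)%R ->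
  (forall w, 0 <= Z w) -> (forall w, (g (Y w))%:E <= Z w) ->
  e%:E <= \int[P]_w (Y w)%:E -> (g e)%:E <= \int[P]_w Z w.
Proof.
move=> cg ndg e0 iY Y0 Z0 gYZ eY.
have [s s0 supp] := convex_nonneg_supporting_line cg ndg e0.
apply: le_trans (affine_minorant_le_integral (c := g e - s * e) (s := s) iY Z0 _).
  have eEY : (e <= fine (\int[P]_w (Y w)%:E))%R.
    by rewrite -lee_fin fineK ?(integrable_fin_num _ iY).
  by have := ler_wpM2l s0 eEY; rewrite lee_fin; lra.
move=> w; apply: le_trans (gYZ w); rewrite lee_fin.
by have := supp _ (Y0 w); lra.
Qed.

End probability_lower_bounds.

Theorem lemma3p10 (R : realType) (X : pmetricType R)
  (dT : measure_display) (T : measurableType dT)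
  (mu : {measure set T -> \bar R})
  (phi : X -> X -> R) (h : T -> X -> \bar R) (tau sigma : R -> R) :
  complete_space X -> separable_space X ->
  caratheodory_distance phi ->
  sigma_finite setT mu ->
  (forall t x, (0 <= h t x)%E) ->
  (forall x, measurable_fun setT (h ^~ x)) ->
  (forall t, continuous (h t)) ->
  let F := fun z : X => (\int[mu]_t h t z)%E in
  zer F !=set0 ->
  nondecr_nonneg tau -> nondecr_nonneg sigma ->
  (forall e, 0 <= e -> 0 <= tau e) -> (forall e, 0 <= e -> 0 <= sigma e) ->
  tau 0 = 0 -> sigma 0 = 0 ->
  (forall e, 0 < e -> 0 < tau e) -> (forall e, 0 < e -> 0 < sigma e) ->
  (forall x : X,
     (mu [set t | ((tau (distphi phi (zer F) x))%:E <= h t x)%E]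
      >= (sigma (distphi phi (zer F) x))%:E)%E) ->
  modulus_regularity phi F (fun e => sigma e * tau e) /\
  (convex_nonneg tau -> convex_nonneg sigma ->
   forall (dO : measure_display) (Omega : measurableType dO)
          (P : probability Omega R) (D : set (Omega -> X)),
     (forall x, D x -> measurable_fun setT (x : Omega -> borel X)) ->
     (forall x, D x ->
        P.-integrable setT (fun w => (distphi phi (zer F) (x w))%:E)) ->
     modulus_regularity_mean P D phi F (fun e => sigma e * tau e)).
Proof.
move=> _ _ [phi0 _] _ h0 mh _ F zF ndt nds t0 s0 _ _ tp sp mu_ge.
set dist := distphi phi (zer F); pose g e := sigma e * tau e.
have g_gt0 e : 0 < e -> 0 < g e by move=> e0; rewrite mulr_gt0 ?sp ?tp.
have ndg : nondecr_nonneg g := nondecr_nonneg_mul s0 t0 nds ndt.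
have dist0 x : 0 <= dist x := distphi_ge0 zF (phi0^~ x).
have F0 x : (0 <= F x)%E by apply: integral_ge0 => t _.
have gF x : ((g (dist x))%:E <= F x)%E.
  apply: le_trans (le_integral_measure_ge mu (t0 _ (dist0 x)) (h0^~ x) (mh x)).
  by rewrite /g EFinM muleC lee_wpmul2l ?lee_fin ?t0 ?mu_ge.
split=> [|ct cs dO Omega P D _ iD]; split=> [e /g_gt0 //|eps e0].
  move=> x; apply: contraTT; rewrite -!leNgt => eps_le.
  by apply: le_trans (gF x); rewrite lee_fin ndg // ltW.
move=> x Dx; apply: contraTT; rewrite -!leNgt => dist_ge.
apply: (convex_nondecr_le_integral (g := g) _ ndg e0 (iD x Dx)) => //.
exact: convex_nonneg_mul.
Qed.
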